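(* For every integer $N\ge1$, with $\omega=e^{2\pi i/N}$, $$0\le\sum_{k=0}^{N-1}\dim\mathbb J^{(1)}_\gamma(\omega^k)\le2\dim(M).$$
   Context: Let $(M,g)$ be a semi-Riemannian manifold of dimension $n$ and $\gamma:[0,1]\to M$ an orientation preserving closed geodesic, extended $1$-periodically. Fix a smooth $1$-periodic family of isomorphisms $T_t:\mathbb R^n\to T_{\gamma(t)}M$ with $g(T_te_i,T_te_j)=\epsilon_i\delta_{ij}$, $\epsilon_i\in\{\pm1\}$. Let $\overline R_t=T_t^{-1}\circ R(\dot\gamma(t),T_t\,\cdot\,)\dot\gamma(t)$ (curvature $R(X,Y)=[\nabla_X,\nabla_Y]-\nabla_{[X,Y]}$) and $\Gamma_t$ defined by $T_t^{-1}\tfrac{D}{dt}\big(T_t\overline V(t)\big)=\overline V'(t)+\Gamma_t\overline V(t)$, extended $\mathbb C$-linearly to $\mathbb C^n$. The Jacobi equation (J) is $V''+2\Gamma_rV'+(\Gamma_r'+\Gamma_r^2-\overline R_r)V=0$ for $V:[0,1]\to\mathbb C^n$. For $z\in\mathbb S^1$, $\mathbb J^{(1)}_\gamma(z)=\{V\ \text{solution of (J)}:V(0)=V(1)=0,\ V'(1)=zV'(0)\}$ (complex vector space). *)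

From Stdlib Require Import Reals.
Open Scope R_scope.

Definition Cx : Type := (R * R)%type.
Definition C0 : Cx := (0, 0).
Definition cadd (a b : Cx) : Cx := (fst a + fst b, snd a + snd b).
Definition cmul (a b : Cx) : Cx :=
  (fst a * fst b - snd a * snd b, fst a * snd b + snd a * fst b).

Definition omega_pow (N k : nat) : Cx :=
  (cos (2 * PI * INR k / INR N), sin (2 * PI * INR k / INR N)).

Fixpoint sumR (n : nat) (f : nat -> R) : R :=
  match n with O => 0 | S m => sumR m f + f m end.
Fixpoint sumC (n : nat) (f : nat -> Cx) : Cx :=
  match n with O => C0 | S m => cadd (sumC m f) (f m) end.
Fixpoint sumN (n : nat) (f : nat -> nat) : nat :=
  match n with O => O | S m => (sumN m f + f m)%nat end.

(** n x n real matrices depending on t: M t i j (only i, j < n matter). *)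
Definition MatFam : Type := R -> nat -> nat -> R.

(** A C^n-valued curve: V i t is the i-th component (only i < n matters). *)
Definition Curve : Type := nat -> R -> Cx.

(** i-th component of the left-hand side of the Jacobi equation
      V'' + 2 G V' + (G' + G^2 - Rb) V
    at time t, for real vectors x = V(t), x1 = V'(t), x2 = V''(t).
    Since the coefficients are real, the complex equation is this
    equation for real and for imaginary parts. *)
Definition jac_lhs (n : nat) (G dG Rb : MatFam) (t : R)
  (x x1 x2 : nat -> R) (i : nat) : R :=
  x2 i
  + sumR n (fun j => 2 * G t i j * x1 j)
  + sumR n (fun j => (dG t i j + sumR n (fun k => G t i k * G t k j)
                      - Rb t i j) * x j).

(** V is a solution of (J) with V(0) = V(1) = 0 and V'(1) = z V'(0),
    i.e. V belongs to J^(1)_gamma(z).  V1, V2 are V', V''. *)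
Definition in_J1 (n : nat) (G dG Rb : MatFam) (z : Cx) (V : Curve) : Prop :=
  exists V1 V2 : Curve,
    (forall i t, (i < n)%nat ->
       derivable_pt_lim (fun s => fst (V i s)) t (fst (V1 i t)) /\
       derivable_pt_lim (fun s => snd (V i s)) t (snd (V1 i t)) /\
       derivable_pt_lim (fun s => fst (V1 i s)) t (fst (V2 i t)) /\
       derivable_pt_lim (fun s => snd (V1 i s)) t (snd (V2 i t))) /\
    (forall t i, (i < n)%nat ->
       jac_lhs n G dG Rb t (fun j => fst (V j t)) (fun j => fst (V1 j t))
               (fun j => fst (V2 j t)) i = 0 /\
       jac_lhs n G dG Rb t (fun j => snd (V j t)) (fun j => snd (V1 j t))
               (fun j => snd (V2 j t)) i = 0) /\
    (forall i, (i < n)%nat ->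
       V i 0 = C0 /\ V i 1 = C0 /\ V1 i 1 = cmul z (V1 i 0)).

Definition cindep (n : nat) (f : nat -> Curve) (d : nat) : Prop :=
  forall c : nat -> Cx,
    (forall i t, (i < n)%nat -> sumC d (fun m => cmul (c m) (f m i t)) = C0) ->
    forall m, (m < d)%nat -> c m = C0.

Definition has_cdim (n : nat) (P : Curve -> Prop) (d : nat) : Prop :=
  (exists f : nat -> Curve, (forall m, (m < d)%nat -> P (f m)) /\ cindep n f d) /\
  ~ (exists f : nat -> Curve, (forall m, (m < S d)%nat -> P (f m)) /\ cindep n f (S d)).

From Stdlib Require Import Reals Lra Lia Classical ClassicalEpsilon FunctionalExtensionality.
Open Scope R_scope.

(** Every element of [J^(1)(z)] is a solution of the linear Jacobi equation (J)
    vanishing at [t = 0]; it is determined by its derivative at [0], a vector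
    of [C^n] (uniqueness for (J), proved by a Gronwall estimate on the phase
    space energy [|V|^2 + |V'|^2]).  Hence any independent family of such
    solutions has at most [n] members, which gives each [J^(1)(z)] a finite
    complex dimension.  Moreover, by periodicity of the coefficients and
    uniqueness, every [V] in [J^(1)(z)] is a Bloch solution:
    [V (t + 1) = z V (t)].  Bloch solutions with pairwise distinct multipliers
    are independent, so bases of the spaces [J^(1)(omega^k)], [k < N],
    concatenate into one independent family of solutions vanishing at [0].
    Its size, the total dimension, is therefore at most [n <= 2 n]. *)

Lemma sumR_ext n f g : (forall j, (j < n)%nat -> f j = g j) -> sumR n f = sumR n g.
Proof. induction n; simpl; intros H; auto. rewrite IHn, H by (auto; lia). reflexivity. Qed.

Lemma sumR_add n f g : sumR n (fun j => f j + g j) = sumR n f + sumR n g.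
Proof. induction n; simpl; [lra | rewrite IHn; lra]. Qed.

Lemma sumR_scal n c f : sumR n (fun j => c * f j) = c * sumR n f.
Proof. induction n; simpl; [lra | rewrite IHn; lra]. Qed.

Lemma sumR_zero n : sumR n (fun _ => 0) = 0.
Proof. induction n; simpl; [lra | rewrite IHn; lra]. Qed.

Lemma sumR_abs_le n f c :
  (forall j, (j < n)%nat -> Rabs (f j) <= c) -> Rabs (sumR n f) <= INR n * c.
Proof.
  induction n; intros H; simpl sumR.
  - rewrite Rabs_R0; simpl; lra.
  - rewrite S_INR. eapply Rle_trans; [apply Rabs_triang |].
    assert (Rabs (sumR n f) <= INR n * c) by (apply IHn; intros; apply H; lia).
    assert (Rabs (f n) <= c) by (apply H; lia). lra.
Qed.

Lemma sumR_nonneg n f : (forall j, (j < n)%nat -> 0 <= f j) -> 0 <= sumR n f.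
Proof.
  induction n; simpl; intros H; [lra |].
  assert (0 <= sumR n f) by (apply IHn; intros; apply H; lia).
  assert (0 <= f n) by (apply H; lia). lra.
Qed.

Lemma sumR_term_le n f j :
  (forall j, (j < n)%nat -> 0 <= f j) -> (j < n)%nat -> f j <= sumR n f.
Proof.
  induction n; simpl; intros H Hj; [lia |].
  assert (0 <= sumR n f) by (apply sumR_nonneg; intros; apply H; lia).
  destruct (Nat.eq_dec j n) as [-> | Hjn]; [lra |].
  assert (f j <= sumR n f) by (apply IHn; [intros; apply H | ]; lia).
  assert (0 <= f n) by (apply H; lia). lra.
Qed.

Lemma dpl_eq f t l l' : derivable_pt_lim f t l -> l = l' -> derivable_pt_lim f t l'.
Proof. intros H ->; exact H. Qed.

Lemma dpl_sumR m (f : R -> nat -> R) f' t :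
  (forall i, (i < m)%nat -> derivable_pt_lim (fun s => f s i) t (f' i)) ->
  derivable_pt_lim (fun s => sumR m (f s)) t (sumR m f').
Proof.
  induction m; simpl; intros H; [apply derivable_pt_lim_const |].
  apply (derivable_pt_lim_plus (fun s => sumR m (f s)) (fun s => f s m));
    [apply IHm; intros |]; apply H; lia.
Qed.

Lemma continuity_pt_sumR m (f : R -> nat -> R) t :
  (forall i, (i < m)%nat -> continuity_pt (fun s => f s i) t) ->
  continuity_pt (fun s => sumR m (f s)) t.
Proof.
  induction m; simpl; intros H; [apply continuity_pt_const; intros ? ?; reflexivity |].
  apply (continuity_pt_plus (fun s => sumR m (f s)) (fun s => f s m));
    [apply IHm; intros |]; apply H; lia.
Qed.

Lemma continuity_pt_Rabs f t : continuity_pt f t -> continuity_pt (fun s => Rabs (f s)) t.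
Proof. intros. apply (continuity_pt_comp f Rabs); auto. apply Rcontinuity_abs. Qed.

Lemma dpl_shift f t l :
  derivable_pt_lim f (t + 1) l -> derivable_pt_lim (fun s => f (s + 1)) t l.
Proof.
  intros H. apply dpl_eq with (l * 1); [| ring].
  apply (derivable_pt_lim_comp (fun s => s + 1) f); auto.
  apply dpl_eq with (1 + 0); [| ring].
  apply derivable_pt_lim_plus; [apply derivable_pt_lim_id | apply derivable_pt_lim_const].
Qed.

Lemma dpl_reflect f t l :
  derivable_pt_lim f (- t) l -> derivable_pt_lim (fun s => f (- s)) t (- l).
Proof.
  intros H. apply dpl_eq with (l * -1); [| ring].
  apply (derivable_pt_lim_comp Ropp f); auto.
  apply dpl_eq with (- 1); [| ring]. apply derivable_pt_lim_opp, derivable_pt_lim_id.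
Qed.

(** Gronwall's inequality, forward in time: a nonnegative function vanishing
    at [0] with [E' <= K E] vanishes on [[0, T]].  [E e^{-Ks}] is nonincreasing. *)
Lemma gronwall_forward (E E' : R -> R) K T :
  (forall t, derivable_pt_lim E t (E' t)) -> (forall t, 0 <= E t) -> E 0 = 0 ->
  (forall t, 0 <= t <= T -> E' t <= K * E t) ->
  forall t, 0 <= t <= T -> E t = 0.
Proof.
  intros Hd Hpos H0 Hb t Ht.
  destruct (Req_dec t 0) as [-> | Hneq]; [exact H0 |].
  set (h := fun s => E s * exp (- K * s)).
  assert (Hh : forall c, derivable_pt_lim h c
                 (E' c * exp (- K * c) + E c * (exp (- K * c) * (- K)))).
  { intro c. apply (derivable_pt_lim_mult E (fun s => exp (- K * s))); [apply Hd |].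
    apply (derivable_pt_lim_comp (fun s => - K * s) exp c (- K) (exp (- K * c))).
    - apply dpl_eq with (- K * 1); [| ring].
      apply derivable_pt_lim_scal, derivable_pt_lim_id.
    - apply derivable_pt_lim_exp. }
  destruct (MVT_cor2 h _ 0 t ltac:(lra) (fun c _ => Hh c)) as [c [Hc Hcr]].
  assert (Hbc := Hb c ltac:(lra)).
  assert (0 < exp (- K * c)) by apply exp_pos.
  assert (0 < exp (- K * t)) by apply exp_pos.
  assert (h 0 = 0) by (unfold h; rewrite H0; ring).
  assert (E' c * exp (- K * c) + E c * (exp (- K * c) * - K) <= 0) by nra.
  assert (h t <= 0) by nra.
  specialize (Hpos t). unfold h in *. nra.
Qed.

(** Gronwall's inequality on a symmetric interval, obtained from the forward
    version and time reversal. *)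
Lemma gronwall (E E' : R -> R) K T :
  (forall t, derivable_pt_lim E t (E' t)) -> (forall t, 0 <= E t) -> E 0 = 0 ->
  (forall t, -T <= t <= T -> Rabs (E' t) <= K * E t) ->
  forall t, -T <= t <= T -> E t = 0.
Proof.
  intros Hd Hpos H0 Hb t Ht.
  destruct (Rle_dec 0 t).
  - apply (gronwall_forward E E' K T); auto; try lra.
    intros s Hs. pose proof (Rle_abs (E' s)). specialize (Hb s ltac:(lra)). lra.
  - replace t with (- - t) by ring.
    apply (gronwall_forward (fun s => E (- s)) (fun s => - E' (- s)) K T); auto; try lra.
    + intros s. apply dpl_reflect, Hd.
    + rewrite Ropp_0. exact H0.
    + intros s Hs. pose proof (Rle_abs (- E' (- s))). rewrite Rabs_Ropp in *.
      specialize (Hb (- s) ltac:(lra)). lra.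
Qed.

Section RealJacobi.
Variables (n : nat) (G dG Rb : MatFam).

Definition jac_coef (t : R) (i j : nat) : R :=
  dG t i j + sumR n (fun k => G t i k * G t k j) - Rb t i j.

Definition real_solution (x x1 x2 : nat -> R -> R) : Prop :=
  (forall i t, (i < n)%nat -> derivable_pt_lim (fun s => x i s) t (x1 i t) /\
                              derivable_pt_lim (fun s => x1 i s) t (x2 i t)) /\
  (forall t i, (i < n)%nat ->
     jac_lhs n G dG Rb t (fun j => x j t) (fun j => x1 j t) (fun j => x2 j t) i = 0).

Lemma jac_lhs_coef t x x1 x2 i : jac_lhs n G dG Rb t x x1 x2 i =
  x2 i + sumR n (fun j => 2 * G t i j * x1 j) + sumR n (fun j => jac_coef t i j * x j).
Proof. reflexivity. Qed.

Lemma jac_lhs_lin t a b x x1 x2 y y1 y2 i :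
  jac_lhs n G dG Rb t (fun j => a * x j + b * y j) (fun j => a * x1 j + b * y1 j)
     (fun j => a * x2 j + b * y2 j) i =
  a * jac_lhs n G dG Rb t x x1 x2 i + b * jac_lhs n G dG Rb t y y1 y2 i.
Proof.
  rewrite !jac_lhs_coef.
  rewrite (sumR_ext n (fun j => 2 * G t i j * (a * x1 j + b * y1 j))
     (fun j => a * (2 * G t i j * x1 j) + b * (2 * G t i j * y1 j))) by (intros; ring).
  rewrite (sumR_ext n (fun j => jac_coef t i j * (a * x j + b * y j))
     (fun j => a * (jac_coef t i j * x j) + b * (jac_coef t i j * y j))) by (intros; ring).
  rewrite !sumR_add, !sumR_scal. ring.
Qed.

Lemma real_solution_lin a b x x1 x2 y y1 y2 :
  real_solution x x1 x2 -> real_solution y y1 y2 ->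
  real_solution (fun i t => a * x i t + b * y i t) (fun i t => a * x1 i t + b * y1 i t)
                (fun i t => a * x2 i t + b * y2 i t).
Proof.
  intros [Hx Jx] [Hy Jy]. split.
  - intros i t Hi. destruct (Hx i t Hi), (Hy i t Hi).
    split; apply (derivable_pt_lim_plus (fun s => a * _ i s) (fun s => b * _ i s));
      apply derivable_pt_lim_scal; auto.
  - intros t i Hi. rewrite jac_lhs_lin, Jx, Jy by auto. ring.
Qed.

Lemma real_solution_ext x x1 x2 y y1 y2 : real_solution x x1 x2 ->
  (forall i t, (i < n)%nat -> y i t = x i t /\ y1 i t = x1 i t /\ y2 i t = x2 i t) ->
  real_solution y y1 y2.
Proof.
  intros [Hx Jx] He. split.
  - intros i t Hi.
    replace (fun s => y i s) with (fun s => x i s)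
      by (apply functional_extensionality; intro s; symmetry; apply He; auto).
    replace (fun s => y1 i s) with (fun s => x1 i s)
      by (apply functional_extensionality; intro s; symmetry; apply He; auto).
    destruct (He i t Hi) as (_ & -> & ->). auto.
  - intros t i Hi. rewrite <- (Jx t i Hi), !jac_lhs_coef.
    destruct (He i t Hi) as (_ & _ & ->). f_equal; [f_equal |]; apply sumR_ext;
      intros j Hj; destruct (He j t Hj) as (Ey & Ey1 & _); rewrite ?Ey, ?Ey1; reflexivity.
Qed.

Lemma real_solution_zero : real_solution (fun _ _ => 0) (fun _ _ => 0) (fun _ _ => 0).
Proof.
  split; [intros; split; apply derivable_pt_lim_const |].
  intros t i Hi. rewrite jac_lhs_coef.
  rewrite (sumR_ext n _ (fun _ => 0)), (sumR_ext n (fun j => _ * 0) (fun _ => 0))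
    by (intros; ring).
  rewrite sumR_zero. ring.
Qed.

Definition energy (x x1 : nat -> R) : R := sumR n (fun i => x i * x i + x1 i * x1 i).

Definition energy_rate (x x1 x2 : nat -> R) : R :=
  sumR n (fun i => 2 * x i * x1 i + 2 * (x1 i * x2 i)).

Lemma energy_nonneg x x1 : 0 <= energy x x1.
Proof. apply sumR_nonneg. intros. pose proof (Rle_0_sqr (x j)); pose proof (Rle_0_sqr (x1 j)).
  unfold Rsqr in *. lra. Qed.

Lemma energy_component x x1 i : (i < n)%nat ->
  x i * x i <= energy x x1 /\ x1 i * x1 i <= energy x x1.
Proof.
  intros Hi. pose proof (Rle_0_sqr (x i)); pose proof (Rle_0_sqr (x1 i)); unfold Rsqr in *.
  assert (x i * x i + x1 i * x1 i <= energy x x1).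
  { apply (sumR_term_le n (fun i => x i * x i + x1 i * x1 i)); auto.
    intros. pose proof (Rle_0_sqr (x j)); pose proof (Rle_0_sqr (x1 j)); unfold Rsqr in *. lra. }
  lra.
Qed.

Lemma jac_solve_x2 t x x1 x2 i : jac_lhs n G dG Rb t x x1 x2 i = 0 ->
  x1 i * x2 i = - (sumR n (fun j => 2 * G t i j * (x1 i * x1 j))
                   + sumR n (fun j => jac_coef t i j * (x1 i * x j))).
Proof.
  rewrite jac_lhs_coef. intros H.
  rewrite (sumR_ext n _ (fun j => x1 i * (2 * G t i j * x1 j))) by (intros; ring).
  rewrite (sumR_ext n (fun j => jac_coef t i j * _) (fun j => x1 i * (jac_coef t i j * x j)))
    by (intros; ring).
  rewrite !sumR_scal. nra.
Qed.

Lemma Rabs_mult_le u v E : u * u <= E -> v * v <= E -> Rabs (u * v) <= E.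
Proof. intros. apply Rabs_le; split; nra. Qed.

(** Energy estimate: where the coefficients of (J) are bounded by [B], the
    energy of a solution grows at most exponentially, at rate [gronwall_rate B]. *)
Definition gronwall_rate (B : R) : R := INR n * (2 + 2 * (INR n * (2 * B) + INR n * B)).

Lemma energy_rate_bound t B x x1 x2 : 0 <= B ->
  (forall i j, (i < n)%nat -> (j < n)%nat ->
     Rabs (G t i j) <= B /\ Rabs (jac_coef t i j) <= B) ->
  (forall i, (i < n)%nat -> jac_lhs n G dG Rb t x x1 x2 i = 0) ->
  Rabs (energy_rate x x1 x2) <= gronwall_rate B * energy x x1.
Proof.
  intros HB0 HB Hjac. set (E := energy x x1).
  assert (HE := energy_nonneg x x1). fold E in HE.
  unfold energy_rate, gronwall_rate. rewrite Rmult_assoc. apply sumR_abs_le. intros i Hi.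
  destruct (energy_component x x1 i Hi) as [Exi Ex1i]. fold E in Exi, Ex1i.
  rewrite (jac_solve_x2 t x x1 x2 i (Hjac i Hi)).
  assert (Rabs (2 * x i * x1 i) <= 2 * E).
  { rewrite Rmult_assoc, Rabs_mult, Rabs_right by lra.
    pose proof (Rabs_mult_le (x i) (x1 i) E). lra. }
  assert (Rabs (sumR n (fun j => 2 * G t i j * (x1 i * x1 j))) <= INR n * (2 * B * E)).
  { apply sumR_abs_le. intros j Hj. rewrite Rabs_mult, Rabs_mult, (Rabs_right 2) by lra.
    destruct (HB i j Hi Hj) as [HG _]. destruct (energy_component x x1 j Hj) as [_ Ex1j].
    pose proof (Rabs_mult_le (x1 i) (x1 j) E Ex1i Ex1j).
    pose proof (Rabs_pos (G t i j)). pose proof (Rabs_pos (x1 i * x1 j)). nra. }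
  assert (Rabs (sumR n (fun j => jac_coef t i j * (x1 i * x j))) <= INR n * (B * E)).
  { apply sumR_abs_le. intros j Hj. rewrite Rabs_mult.
    destruct (HB i j Hi Hj) as [_ HA]. destruct (energy_component x x1 j Hj) as [Exj _].
    pose proof (Rabs_mult_le (x1 i) (x j) E Ex1i Exj).
    pose proof (Rabs_pos (jac_coef t i j)). pose proof (Rabs_pos (x1 i * x j)). nra. }
  eapply Rle_trans; [apply Rabs_triang |].
  rewrite (Rabs_mult 2 (- _)), (Rabs_right 2), Rabs_Ropp by lra.
  pose proof (Rabs_triang (sumR n (fun j => 2 * G t i j * (x1 i * x1 j)))
                          (sumR n (fun j => jac_coef t i j * (x1 i * x j)))).
  nra.
Qed.

Hypothesis HGder : forall t i j, (i < n)%nat -> (j < n)%nat ->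
  derivable_pt_lim (fun s => G s i j) t (dG t i j).
Hypothesis HdGcont : forall i j, (i < n)%nat -> (j < n)%nat -> continuity (fun s => dG s i j).
Hypothesis HRbcont : forall i j, (i < n)%nat -> (j < n)%nat -> continuity (fun s => Rb s i j).

Lemma G_continuous i j t : (i < n)%nat -> (j < n)%nat -> continuity_pt (fun s => G s i j) t.
Proof. intros. apply derivable_continuous_pt. exists (dG t i j). apply HGder; auto. Qed.

Lemma jac_coef_continuous i j t : (i < n)%nat -> (j < n)%nat ->
  continuity_pt (fun s => jac_coef s i j) t.
Proof.
  intros Hi Hj. unfold jac_coef.
  apply (continuity_pt_minus (fun s => dG s i j + sumR n (fun k => G s i k * G s k j))
                             (fun s => Rb s i j)); [| apply HRbcont; auto].
  apply (continuity_pt_plus (fun s => dG s i j) (fun s => sumR n (fun k => G s i k * G s k j)));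
    [apply HdGcont; auto |].
  apply (continuity_pt_sumR n (fun s k => G s i k * G s k j)). intros k Hk.
  apply (continuity_pt_mult (fun s => G s i k) (fun s => G s k j)); apply G_continuous; auto.
Qed.

Definition coef_bound (s : R) : R :=
  sumR n (fun i => sumR n (fun j => Rabs (G s i j) + Rabs (jac_coef s i j))).

Lemma coef_bound_continuous t : continuity_pt coef_bound t.
Proof.
  apply (continuity_pt_sumR n (fun s i => sumR n (fun j => Rabs (G s i j) + Rabs (jac_coef s i j)))).
  intros i Hi. apply (continuity_pt_sumR n (fun s j => Rabs (G s i j) + Rabs (jac_coef s i j))).
  intros j Hj. apply (continuity_pt_plus (fun s => Rabs (G s i j)) (fun s => Rabs (jac_coef s i j)));
    apply continuity_pt_Rabs; [apply G_continuous | apply jac_coef_continuous]; auto.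
Qed.

Lemma coef_bound_nonneg s : 0 <= coef_bound s.
Proof.
  apply sumR_nonneg; intros; apply sumR_nonneg; intros.
  pose proof (Rabs_pos (G s j j0)); pose proof (Rabs_pos (jac_coef s j j0)); lra.
Qed.

Lemma coef_bound_spec s i j : (i < n)%nat -> (j < n)%nat ->
  Rabs (G s i j) <= coef_bound s /\ Rabs (jac_coef s i j) <= coef_bound s.
Proof.
  intros Hi Hj. set (row i := sumR n (fun j => Rabs (G s i j) + Rabs (jac_coef s i j))).
  assert (Hterm : forall i j, 0 <= Rabs (G s i j) + Rabs (jac_coef s i j)).
  { intros. pose proof (Rabs_pos (G s i0 j0)); pose proof (Rabs_pos (jac_coef s i0 j0)); lra. }
  assert (Rabs (G s i j) + Rabs (jac_coef s i j) <= row i)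
    by (apply (sumR_term_le n (fun j => Rabs (G s i j) + Rabs (jac_coef s i j))); auto).
  assert (row i <= coef_bound s)
    by (apply (sumR_term_le n row); auto; intros; apply sumR_nonneg; auto).
  pose proof (Rabs_pos (G s i j)); pose proof (Rabs_pos (jac_coef s i j)). lra.
Qed.

(** Uniqueness for (J): a real solution with zero initial data vanishes.
    On [[-T, T]] the coefficients are bounded, so Gronwall applies to the energy. *)
Lemma real_solution_unique x x1 x2 : real_solution x x1 x2 ->
  (forall i, (i < n)%nat -> x i 0 = 0 /\ x1 i 0 = 0) ->
  forall t i, (i < n)%nat -> x i t = 0 /\ x1 i t = 0.
Proof.
  intros [Hd Hjac] H0 t0 i0 Hi0.
  set (E := fun t => energy (fun i => x i t) (fun i => x1 i t)).
  set (E' := fun t => energy_rate (fun i => x i t) (fun i => x1 i t) (fun i => x2 i t)).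
  assert (HdE : forall t, derivable_pt_lim E t (E' t)).
  { intro t. apply (dpl_sumR n (fun s i => x i s * x i s + x1 i s * x1 i s)). intros i Hi.
    destruct (Hd i t Hi) as [Ha Hb]. eapply dpl_eq.
    - apply (derivable_pt_lim_plus (fun s => x i s * x i s) (fun s => x1 i s * x1 i s));
        apply derivable_pt_lim_mult; eauto.
    - ring. }
  set (T := Rabs t0).
  destruct (continuity_ab_maj coef_bound (- T) T ltac:(unfold T; pose proof (Rabs_pos t0); lra)
            (fun c _ => coef_bound_continuous c)) as [Tmax [HTmax _]].
  set (B := coef_bound Tmax).
  assert (HK : forall t, - T <= t <= T -> Rabs (E' t) <= gronwall_rate B * E t).
  { intros t Ht. apply (energy_rate_bound t); [apply coef_bound_nonneg | | intros; apply Hjac; auto].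
    intros i j Hi Hj. destruct (coef_bound_spec t i j Hi Hj). specialize (HTmax t Ht).
    unfold B; lra. }
  assert (HE00 : E 0 = 0).
  { unfold E, energy. rewrite (sumR_ext n _ (fun _ => 0)); [apply sumR_zero |].
    intros j Hj. destruct (H0 j Hj) as [-> ->]. ring. }
  assert (HEt := gronwall E E' _ T HdE (fun t => energy_nonneg _ _) HE00 HK t0
                   ltac:(unfold T; split; [pose proof (Rle_abs (- t0)) | pose proof (Rle_abs t0)];
                         rewrite ?Rabs_Ropp in *; lra)).
  destruct (energy_component (fun i => x i t0) (fun i => x1 i t0) i0 Hi0).
  fold (E t0) in *. rewrite HEt in *.
  split; apply Rsqr_0_uniq; unfold Rsqr;
    pose proof (Rle_0_sqr (x i0 t0)); pose proof (Rle_0_sqr (x1 i0 t0)); unfold Rsqr in *; lra.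
Qed.

Hypothesis HGper : forall t i j, G (t + 1) i j = G t i j.
Hypothesis HRbper : forall t i j, Rb (t + 1) i j = Rb t i j.

Lemma dG_periodic t i j : (i < n)%nat -> (j < n)%nat -> dG (t + 1) i j = dG t i j.
Proof.
  intros Hi Hj.
  assert (Hs := dpl_shift (fun s => G s i j) t _ (HGder (t + 1) i j Hi Hj)). cbv beta in Hs.
  replace (fun s => G (s + 1) i j) with (fun s => G s i j) in Hs
    by (apply functional_extensionality; intro; symmetry; apply HGper).
  exact (uniqueness_limite _ _ _ _ Hs (HGder t i j Hi Hj)).
Qed.

Lemma jac_lhs_periodic t x x1 x2 i : (i < n)%nat ->
  jac_lhs n G dG Rb (t + 1) x x1 x2 i = jac_lhs n G dG Rb t x x1 x2 i.
Proof.
  intros Hi. rewrite !jac_lhs_coef. f_equal; [f_equal |]; apply sumR_ext; intros j Hj.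
  - rewrite HGper; reflexivity.
  - unfold jac_coef. rewrite dG_periodic, HRbper by auto.
    rewrite (sumR_ext n (fun k => G (t + 1) i k * G (t + 1) k j) (fun k => G t i k * G t k j))
      by (intros; rewrite !HGper; reflexivity).
    reflexivity.
Qed.

Lemma real_solution_shift x x1 x2 : real_solution x x1 x2 ->
  real_solution (fun i t => x i (t + 1)) (fun i t => x1 i (t + 1)) (fun i t => x2 i (t + 1)).
Proof.
  intros [Hd Hjac]. split.
  - intros i t Hi. destruct (Hd i (t + 1) Hi). split; apply dpl_shift; auto.
  - intros t i Hi. rewrite <- jac_lhs_periodic by auto. apply Hjac; auto.
Qed.

End RealJacobi.

Definition C1 : Cx := (1, 0).
Definition copp (a : Cx) : Cx := (- fst a, - snd a).
Definition csub (a b : Cx) : Cx := cadd a (copp b).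

Lemma cx_eq (a b : Cx) : fst a = fst b -> snd a = snd b -> a = b.
Proof. destruct a, b; simpl; intros -> ->; reflexivity. Qed.

Ltac cring := unfold csub, copp, cadd, cmul, C0, C1; apply cx_eq; cbn [fst snd]; ring.

Lemma C1_neq_C0 : C1 <> C0.
Proof. unfold C1, C0; intro H; injection H; lra. Qed.

(** [Cx] has no zero divisors: if [a <> 0], then [|a|^2 b = conj(a) (a b) = 0]. *)
Lemma cmul_integral a b : cmul a b = C0 -> a = C0 \/ b = C0.
Proof.
  destruct a as [a1 a2], b as [b1 b2]. unfold cmul, C0; simpl. intros H.
  injection H as H1 H2.
  destruct (Req_dec (a1 * a1 + a2 * a2) 0) as [Ha | Ha].
  - left. pose proof (Rle_0_sqr a1); pose proof (Rle_0_sqr a2); unfold Rsqr in *.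
    f_equal; apply Rsqr_0_uniq; unfold Rsqr; lra.
  - right.
    assert ((a1 * a1 + a2 * a2) * b1 = a1 * (a1 * b1 - a2 * b2) + a2 * (a1 * b2 + a2 * b1))
      by ring.
    assert ((a1 * a1 + a2 * a2) * b2 = a1 * (a1 * b2 + a2 * b1) - a2 * (a1 * b1 - a2 * b2))
      by ring.
    f_equal; apply (Rmult_eq_reg_l (a1 * a1 + a2 * a2)); auto; rewrite H1, H2 in *; lra.
Qed.

Lemma cadd_eq0 a b : cadd a b = C0 -> a = copp b.
Proof. intros H. replace a with (cadd (cadd a b) (copp b)) by cring. rewrite H. cring. Qed.

Lemma csub_eq0 a b : csub a b = C0 -> a = b.
Proof. intros H. replace a with (cadd (csub a b) b) by cring. rewrite H. cring. Qed.

Lemma sumC_ext D f g : (forall m, (m < D)%nat -> f m = g m) -> sumC D f = sumC D g.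
Proof. induction D; simpl; intros H; auto. rewrite IHD, H by (auto; lia). reflexivity. Qed.

Lemma sumC_add D f g : sumC D (fun m => cadd (f m) (g m)) = cadd (sumC D f) (sumC D g).
Proof. induction D; simpl; [| rewrite IHD]; cring. Qed.

Lemma sumC_opp D f : sumC D (fun m => copp (f m)) = copp (sumC D f).
Proof. induction D; simpl; [| rewrite IHD]; cring. Qed.

Lemma sumC_scal D a f : sumC D (fun m => cmul a (f m)) = cmul a (sumC D f).
Proof. induction D; simpl; [| rewrite IHD]; cring. Qed.

Lemma sumC_scal_r D a f : sumC D (fun m => cmul (f m) a) = cmul (sumC D f) a.
Proof. induction D; simpl; [| rewrite IHD]; cring. Qed.

Lemma sumC_zero D : sumC D (fun _ => C0) = C0.
Proof. induction D; simpl; [| rewrite IHD]; cring. Qed.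

Lemma sumC_split a b f :
  sumC (a + b) f = cadd (sumC a f) (sumC b (fun m => f (a + m)%nat)).
Proof.
  induction b; simpl; [rewrite Nat.add_0_r; cring |].
  rewrite Nat.add_succ_r. simpl. rewrite IHb. cring.
Qed.

Lemma sumC_replace q p a F : (p < q)%nat ->
  sumC q (fun m => if Nat.eqb m p then a else F m) = cadd (sumC q F) (csub a (F p)).
Proof.
  induction q; intros Hp; [lia |]. simpl.
  destruct (Nat.eq_dec p q) as [-> | Hpq].
  - rewrite Nat.eqb_refl, (sumC_ext q _ F); [cring |].
    intros m Hm. destruct (Nat.eqb_spec m q); [lia | reflexivity].
  - rewrite IHq by lia. destruct (Nat.eqb_spec q p); [lia | cring].
Qed.

Definition swap_index (p q m : nat) : nat :=
  if Nat.eqb m p then q else if Nat.eqb m q then p else m.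

Lemma swap_index_involutive p q m : swap_index p q (swap_index p q m) = m.
Proof.
  unfold swap_index.
  destruct (Nat.eqb_spec m p) as [-> | Hmp].
  - destruct (Nat.eqb_spec q p) as [-> | Hqp]; [reflexivity |]. rewrite Nat.eqb_refl. reflexivity.
  - destruct (Nat.eqb_spec m q) as [-> | Hmq]; [rewrite Nat.eqb_refl; reflexivity |].
    destruct (Nat.eqb_spec m p); [lia |]. destruct (Nat.eqb_spec m q); [lia | reflexivity].
Qed.

Lemma swap_index_lt p q m : (p <= q)%nat -> (m < S q)%nat -> (swap_index p q m < S q)%nat.
Proof.
  unfold swap_index. intros.
  destruct (Nat.eqb_spec m p); [lia |]. destruct (Nat.eqb_spec m q); lia.
Qed.

Lemma sumC_swap p q F : (p <= q)%nat ->
  sumC (S q) (fun m => F (swap_index p q m)) = sumC (S q) F.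
Proof.
  intros Hpq. simpl.
  replace (swap_index p q q) with p
    by (unfold swap_index; destruct (Nat.eqb_spec q p); [auto | rewrite Nat.eqb_refl; auto]).
  rewrite (sumC_ext q (fun m => F (swap_index p q m)) (fun m => if Nat.eqb m p then F q else F m)).
  2:{ intros m Hm. unfold swap_index.
      destruct (Nat.eqb_spec m p); [reflexivity |]. destruct (Nat.eqb_spec m q); [lia | reflexivity]. }
  destruct (Nat.eq_dec p q) as [-> | Hne].
  - rewrite (sumC_ext q _ F); [reflexivity |].
    intros m Hm. destruct (Nat.eqb_spec m q); [lia | reflexivity].
  - rewrite sumC_replace by lia. cring.
Qed.

(** One step of Gaussian elimination.  Let [u 0, ..., u q] be vectors whose
    last one has a nonzero pivot [u q n].  Eliminating coordinate [n] gives the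
    vectors [w m = u q n * u m - u m n * u q] ([m < q]); any linear relation
    [c'] among the [w m] on the coordinates [< n] lifts to the relation
    [pivot_lift] among the [u m] on the coordinates [<= n]. *)
Definition pivot_lift (q n : nat) (u : nat -> nat -> Cx) (c' : nat -> Cx) (m : nat) : Cx :=
  if Nat.ltb m q then cmul (c' m) (u q n)
  else copp (sumC q (fun k => cmul (c' k) (u k n))).

Lemma pivot_lift_relation q n (u : nat -> nat -> Cx) (c' : nat -> Cx) :
  (forall i, (i < n)%nat -> sumC q (fun m =>
     cmul (c' m) (csub (cmul (u q n) (u m i)) (cmul (u m n) (u q i)))) = C0) ->
  forall i, (i < S n)%nat -> sumC (S q) (fun m => cmul (pivot_lift q n u c' m) (u m i)) = C0.
Proof.
  intros Hrel i Hi.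
  assert (Hsum : sumC (S q) (fun m => cmul (pivot_lift q n u c' m) (u m i)) =
     sumC q (fun m => cmul (c' m) (csub (cmul (u q n) (u m i)) (cmul (u m n) (u q i))))).
  { simpl. unfold pivot_lift at 2. destruct (Nat.ltb_spec q q); [lia |].
    rewrite (sumC_ext q (fun m => cmul (pivot_lift q n u c' m) (u m i))
                        (fun m => cmul (cmul (c' m) (u q n)) (u m i))).
    2:{ intros m Hm. unfold pivot_lift. destruct (Nat.ltb_spec m q); [reflexivity | lia]. }
    rewrite (sumC_ext q
      (fun m => cmul (c' m) (csub (cmul (u q n) (u m i)) (cmul (u m n) (u q i))))
      (fun m => cadd (cmul (cmul (c' m) (u q n)) (u m i)) (copp (cmul (cmul (c' m) (u m n)) (u q i))))).
    2:{ intros m Hm. cring. }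
    rewrite sumC_add, sumC_opp, (sumC_scal_r q (u q i) (fun m => cmul (c' m) (u m n))). cring. }
  rewrite Hsum. destruct (Nat.eq_dec i n) as [-> | Hin].
  - rewrite (sumC_ext q _ (fun _ => C0)); [apply sumC_zero | intros; cring].
  - apply Hrel. lia.
Qed.

Lemma homogeneous_system_nontrivial : forall n D (v : nat -> nat -> Cx), (n < D)%nat ->
  exists c, (exists m, (m < D)%nat /\ c m <> C0) /\
    forall i, (i < n)%nat -> sumC D (fun m => cmul (c m) (v m i)) = C0.
Proof.
  induction n; intros D v HD.
  - exists (fun _ => C1). split; [exists 0%nat; split; [lia | apply C1_neq_C0] | intros; lia].
  - destruct (classic (exists p, (p < D)%nat /\ v p n <> C0)) as [[p [Hp Hpn]] | Hno].
    2:{ destruct (IHn D v ltac:(lia)) as [c [Hc Hs]]. exists c. split; [exact Hc |].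
        intros i Hi. destruct (Nat.eq_dec i n) as [-> | Hin]; [| apply Hs; lia].
        rewrite (sumC_ext D _ (fun _ => C0)); [apply sumC_zero |].
        intros m Hm. replace (v m n) with C0 by (apply NNPP; intro; apply Hno; eauto). cring. }
    destruct D as [| q]; [lia |].
    (* Move the pivot to the last position, eliminate, then move it back. *)
    set (u := fun m i => v (swap_index p q m) i).
    assert (Hpiv : u q n <> C0).
    { unfold u, swap_index. destruct (Nat.eqb_spec q p) as [-> | _]; [exact Hpn |].
      rewrite Nat.eqb_refl. exact Hpn. }
    destruct (IHn q (fun m i => csub (cmul (u q n) (u m i)) (cmul (u m n) (u q i))) ltac:(lia))
      as [c' [[m0 [Hm0 Hc'0]] Hs']].
    exists (fun m => pivot_lift q n u c' (swap_index p q m)). split.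
    + exists (swap_index p q m0). split; [apply swap_index_lt; lia |].
      rewrite swap_index_involutive. unfold pivot_lift.
      destruct (Nat.ltb_spec m0 q); [| lia]. intro Hz. apply cmul_integral in Hz. tauto.
    + intros i Hi.
      rewrite (sumC_ext (S q) _
                 (fun m => (fun m => cmul (pivot_lift q n u c' m) (u m i)) (swap_index p q m))).
      2:{ intros m Hm. unfold u. rewrite swap_index_involutive. reflexivity. }
      rewrite (sumC_swap p q (fun m => cmul (pivot_lift q n u c' m) (u m i))) by lia.
      apply pivot_lift_relation; auto.
Qed.

Definition re (V : Curve) : nat -> R -> R := fun i t => fst (V i t).
Definition im (V : Curve) : nat -> R -> R := fun i t => snd (V i t).

Definition lincomb (D : nat) (c : nat -> Cx) (f : nat -> Curve) : Curve :=
  fun i t => sumC D (fun m => cmul (c m) (f m i t)).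

Lemma nat_choice {A : Type} (P : nat -> A -> Prop) :
  (forall m, exists x, P m x) -> exists g : nat -> A, forall m, P m (g m).
Proof.
  intros H. exists (fun m => proj1_sig (constructive_indefinite_description _ (H m))).
  intro m. exact (proj2_sig (constructive_indefinite_description _ (H m))).
Qed.

Lemma finite_choice {A : Type} (a0 : A) (D : nat) (P : nat -> A -> Prop) :
  (forall m, (m < D)%nat -> exists x, P m x) ->
  exists g : nat -> A, forall m, (m < D)%nat -> P m (g m).
Proof.
  intros H. apply (nat_choice (fun m x => (m < D)%nat -> P m x)). intro m.
  destruct (classic (m < D)%nat) as [Hm | Hm].
  - destruct (H m Hm) as [x Hx]; eauto.
  - exists a0; intro; contradiction.
Qed.

Section ComplexJacobi.
Variables (n : nat) (G dG Rb : MatFam).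

(** Since the coefficients are real, a complex curve solves (J) iff its real
    and imaginary parts do. *)
Definition complex_solution (V V1 V2 : Curve) : Prop :=
  real_solution n G dG Rb (re V) (re V1) (re V2) /\
  real_solution n G dG Rb (im V) (im V1) (im V2).

Lemma complex_solution_lin a b U U1 U2 V V1 V2 :
  complex_solution U U1 U2 -> complex_solution V V1 V2 ->
  complex_solution (fun i t => cadd (cmul a (U i t)) (cmul b (V i t)))
                   (fun i t => cadd (cmul a (U1 i t)) (cmul b (V1 i t)))
                   (fun i t => cadd (cmul a (U2 i t)) (cmul b (V2 i t))).
Proof.
  intros [Ur Ui] [Vr Vi]. split; eapply real_solution_ext.
  - apply (real_solution_lin n G dG Rb 1 1 _ _ _ _ _ _
      (real_solution_lin n G dG Rb (fst a) (- snd a) _ _ _ _ _ _ Ur Ui)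
      (real_solution_lin n G dG Rb (fst b) (- snd b) _ _ _ _ _ _ Vr Vi)).
  - intros; unfold re, im, cadd, cmul; cbn [fst snd]; repeat split; ring.
  - apply (real_solution_lin n G dG Rb 1 1 _ _ _ _ _ _
      (real_solution_lin n G dG Rb (fst a) (snd a) _ _ _ _ _ _ Ui Ur)
      (real_solution_lin n G dG Rb (fst b) (snd b) _ _ _ _ _ _ Vi Vr)).
  - intros; unfold re, im, cadd, cmul; cbn [fst snd]; repeat split; ring.
Qed.

Lemma complex_solution_ext V V1 V2 W W1 W2 : complex_solution V V1 V2 ->
  (forall i t, (i < n)%nat -> W i t = V i t /\ W1 i t = V1 i t /\ W2 i t = V2 i t) ->
  complex_solution W W1 W2.
Proof.
  intros [Hr Hi] He. split; eapply real_solution_ext; [exact Hr | | exact Hi |];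
    intros i t Hn; unfold re, im; destruct (He i t Hn) as (-> & -> & ->); auto.
Qed.

Lemma complex_solution_lincomb D c f f1 f2 :
  (forall m, (m < D)%nat -> complex_solution (f m) (f1 m) (f2 m)) ->
  complex_solution (lincomb D c f) (lincomb D c f1) (lincomb D c f2).
Proof.
  induction D; intros H.
  - split; apply real_solution_zero.
  - eapply complex_solution_ext.
    + apply (complex_solution_lin C1 (c D) _ _ _ (f D) (f1 D) (f2 D)
               (IHD ltac:(intros; apply H; lia)) (H D ltac:(lia))).
    + intros; unfold lincomb; simpl; repeat split; cring.
Qed.

Hypothesis HGder : forall t i j, (i < n)%nat -> (j < n)%nat ->
  derivable_pt_lim (fun s => G s i j) t (dG t i j).
Hypothesis HdGcont : forall i j, (i < n)%nat -> (j < n)%nat -> continuity (fun s => dG s i j).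
Hypothesis HRbcont : forall i j, (i < n)%nat -> (j < n)%nat -> continuity (fun s => Rb s i j).

Lemma complex_solution_unique W W1 W2 : complex_solution W W1 W2 ->
  (forall i, (i < n)%nat -> W i 0 = C0 /\ W1 i 0 = C0) ->
  forall t i, (i < n)%nat -> W i t = C0.
Proof.
  intros [Hr Hi] H0 t i Hn.
  assert (Hre := real_solution_unique n G dG Rb HGder HdGcont HRbcont _ _ _ Hr
     ltac:(intros j Hj; destruct (H0 j Hj) as [E1 E2]; unfold re; rewrite E1, E2; auto) t i Hn).
  assert (Him := real_solution_unique n G dG Rb HGder HdGcont HRbcont _ _ _ Hi
     ltac:(intros j Hj; destruct (H0 j Hj) as [E1 E2]; unfold im; rewrite E1, E2; auto) t i Hn).
  unfold re, im in *. apply cx_eq; simpl; tauto.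
Qed.

Definition vanishing_solution (V : Curve) : Prop :=
  exists V1 V2, complex_solution V V1 V2 /\ forall i, (i < n)%nat -> V i 0 = C0.

(** The space of solutions vanishing at [0] has dimension at most [n]: they are
    determined by [V'(0)], and more than [n] vectors [V'(0)] in [C^n] are
    linearly dependent. *)
Lemma vanishing_solutions_dim_le D f :
  (forall m, (m < D)%nat -> vanishing_solution (f m)) -> cindep n f D -> (D <= n)%nat.
Proof.
  intros HS HI. destruct (Nat.le_gt_cases D n) as [| Hlt]; [assumption | exfalso].
  destruct (finite_choice (fun _ _ => C0) D (fun m V1 => exists V2,
              complex_solution (f m) V1 V2 /\ forall i, (i < n)%nat -> f m i 0 = C0))
    as [f1 Hf1]; [intros m Hm; destruct (HS m Hm) as (V1 & V2 & H); eauto |].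
  destruct (finite_choice (fun _ _ => C0) D (fun m V2 =>
              complex_solution (f m) (f1 m) V2 /\ forall i, (i < n)%nat -> f m i 0 = C0))
    as [f2 Hf2]; [intros m Hm; destruct (Hf1 m Hm) as (V2 & H); eauto |].
  destruct (homogeneous_system_nontrivial n D (fun m i => f1 m i 0) Hlt)
    as [c [[m0 [Hm0 Hc0]] Hs]].
  apply Hc0. apply (HI c); auto. intros i t Hi.
  apply (complex_solution_unique (lincomb D c f) (lincomb D c f1) (lincomb D c f2)); auto.
  - apply complex_solution_lincomb. intros m Hm. apply Hf2; auto.
  - intros j Hj. split; unfold lincomb; [| apply Hs; auto].
    rewrite (sumC_ext D _ (fun _ => C0)); [apply sumC_zero |].
    intros m Hm. destruct (Hf2 m Hm) as [_ E]. rewrite E by auto. cring.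
Qed.

Hypothesis HGper : forall t i j, G (t + 1) i j = G t i j.
Hypothesis HRbper : forall t i j, Rb (t + 1) i j = Rb t i j.

Definition bloch (z : Cx) (V : Curve) : Prop :=
  forall t i, (i < n)%nat -> V i (t + 1) = cmul z (V i t).

(** Elements of [J^(1)(z)] are Bloch solutions with multiplier [z]:
    [V (. + 1) - z V] solves (J) with zero initial data, hence vanishes. *)
Lemma bloch_of_boundary z V V1 V2 : complex_solution V V1 V2 ->
  (forall i, (i < n)%nat -> V i 0 = C0 /\ V i 1 = C0 /\ V1 i 1 = cmul z (V1 i 0)) ->
  bloch z V.
Proof.
  intros [Hr Hi] HB t i Hn.
  assert (Hshift : complex_solution (fun i t => V i (t + 1)) (fun i t => V1 i (t + 1))
                                    (fun i t => V2 i (t + 1)))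
    by (split; [apply (real_solution_shift n G dG Rb HGder HGper HRbper _ _ _ Hr)
               | apply (real_solution_shift n G dG Rb HGder HGper HRbper _ _ _ Hi)]).
  assert (Hdiff := complex_solution_unique _ _ _
                     (complex_solution_lin C1 (copp z) _ _ _ _ _ _ Hshift (conj Hr Hi))).
  apply csub_eq0. replace (csub (V i (t + 1)) (cmul z (V i t)))
    with (cadd (cmul C1 (V i (t + 1))) (cmul (copp z) (V i t))) by cring.
  refine (Hdiff _ t i Hn). intros j Hj. cbv beta. rewrite Rplus_0_l.
  destruct (HB j Hj) as (E1 & E2 & E3). rewrite E1, E2, E3. split; cring.
Qed.

End ComplexJacobi.

(** The [N]-th roots of unity [omega^k], [k < N], are pairwise distinct:
    [omega^a = omega^b] forces [cos (2 pi (b - a) / N) = 1], i.e.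
    [sin (pi (b - a) / N) = 0], impossible for [0 < b - a < N]. *)
Lemma omega_pow_injective N a b : (a < b)%nat -> (b < N)%nat -> omega_pow N a <> omega_pow N b.
Proof.
  intros Hab HbN H. unfold omega_pow in H. injection H as Hc Hs.
  set (al := 2 * PI * INR a / INR N) in *. set (be := 2 * PI * INR b / INR N) in *.
  assert (Hcos : cos (be - al) = 1).
  { rewrite cos_minus, <- Hc, <- Hs. pose proof (sin2_cos2 al). unfold Rsqr in *. lra. }
  assert (HN : 0 < INR N) by (apply lt_0_INR; lia).
  assert (Hba : INR a < INR b) by (apply lt_INR; lia).
  assert (HbN' : INR b < INR N) by (apply lt_INR; lia).
  pose proof (pos_INR a). pose proof PI_RGT_0.
  set (r := (INR b - INR a) / INR N).
  assert (Hr0 : 0 < r) by (apply Rdiv_lt_0_compat; lra).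
  assert (Hr1 : r < 1).
  { apply (Rmult_lt_reg_r (INR N)); [lra |].
    unfold r, Rdiv. rewrite Rmult_assoc, Rinv_l by lra. lra. }
  assert (Hx : be - al = 2 * (PI * r)) by (unfold be, al, r; field; lra).
  assert (0 < sin (PI * r)) by (apply sin_gt_0; nra).
  rewrite Hx, cos_2a_sin in Hcos. nra.
Qed.

Lemma bloch_lincomb n z D c f : (forall m, (m < D)%nat -> bloch n z (f m)) ->
  bloch n z (lincomb D c f).
Proof.
  intros H t i Hi. unfold lincomb. rewrite <- sumC_scal.
  apply sumC_ext. intros m Hm. rewrite (H m Hm t i Hi). cring.
Qed.

Section Concatenation.
Variables (n : nat) (z : nat -> Cx) (d : nat -> nat) (F : nat -> nat -> Curve).

(** The concatenation [F 0 0, ..., F 0 (d 0 - 1), F 1 0, ...] of the first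
    [K] families, and the family [block K j] the [j]-th term comes from. *)
Fixpoint concat (K j : nat) : Curve :=
  match K with
  | O => fun _ _ => C0
  | S K' => if Nat.ltb j (sumN K' d) then concat K' j else F K' (j - sumN K' d)
  end.

Fixpoint block (K j : nat) : nat :=
  match K with
  | O => O
  | S K' => if Nat.ltb j (sumN K' d) then block K' j else K'
  end.

Lemma concat_spec K j : (j < sumN K d)%nat ->
  (block K j < K)%nat /\ exists m, (m < d (block K j))%nat /\ concat K j = F (block K j) m.
Proof.
  revert j; induction K; intros j Hj; simpl in *; [lia |].
  destruct (Nat.ltb_spec j (sumN K d)); [destruct (IHK j) as [? ?]; auto |].
  split; [lia | exists (j - sumN K d)%nat; split; [lia | reflexivity]].
Qed.

Lemma concat_indep K :
  (forall a b, (a < b)%nat -> (b < K)%nat -> z a <> z b) ->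
  (forall k m, (k < K)%nat -> (m < d k)%nat -> bloch n (z k) (F k m)) ->
  (forall k, (k < K)%nat -> cindep n (F k) (d k)) ->
  cindep n (concat K) (sumN K d).
Proof.
  induction K as [| K IHK]; intros Hz Hbl Hind c Hc j Hj; [simpl in Hj; lia |].
  set (s := sumN K d) in *.
  assert (Hcat_bloch : forall j, (j < s)%nat -> bloch n (z (block K j)) (concat K j)).
  { intros j0 Hj0. destruct (concat_spec K j0 Hj0) as [Hb [m [Hm ->]]]. apply Hbl; lia. }
  set (A := lincomb s c (concat K)).
  set (B := lincomb (d K) (fun m => c (s + m)%nat) (F K)).
  assert (HAB : forall i t, (i < n)%nat -> A i t = copp (B i t)).
  { intros i t Hi. apply cadd_eq0. rewrite <- (Hc i t Hi). simpl sumN. fold s.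
    rewrite sumC_split. unfold A, B, lincomb. f_equal; apply sumC_ext; intros m Hm; simpl; fold s.
    - destruct (Nat.ltb_spec m s); [reflexivity | lia].
    - destruct (Nat.ltb_spec (s + m) s); [lia |]. do 3 f_equal. lia. }
  assert (HB : bloch n (z K) B) by (apply bloch_lincomb; intros; apply Hbl; lia).
  (* [A] is then Bloch with multiplier [z K], so [A (. + 1) - z K A] is a
     relation among the first [K] families with coefficients [c j (z_j - z K)]. *)
  assert (Hc' : forall j, (j < s)%nat -> cmul (c j) (csub (z (block K j)) (z K)) = C0).
  { apply IHK; [intros; apply Hz; lia | intros; apply Hbl; lia | intros; apply Hind; lia |].
    intros i t Hi.
    transitivity (csub (A i (t + 1)) (cmul (z K) (A i t))).
    - unfold A, lincomb. rewrite <- sumC_scal. unfold csub. rewrite <- sumC_opp, <- sumC_add.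
      apply sumC_ext. intros j0 Hj0. rewrite (Hcat_bloch j0 Hj0 t i Hi). cring.
    - rewrite !HAB, HB by auto. cring. }
  assert (HcA : forall j, (j < s)%nat -> c j = C0).
  { intros j0 Hj0. destruct (cmul_integral _ _ (Hc' j0 Hj0)) as [| Hzeq]; [assumption | exfalso].
    destruct (concat_spec K j0 Hj0) as [Hb _].
    apply (Hz (block K j0) K); [lia | lia | apply csub_eq0; exact Hzeq]. }
  assert (HcB : forall m, (m < d K)%nat -> c (s + m)%nat = C0).
  { apply (Hind K ltac:(lia) (fun m => c (s + m)%nat)). intros i t Hi.
    change (B i t = C0). replace (B i t) with (copp (A i t)) by (rewrite HAB by auto; cring).
    unfold A, lincomb. rewrite (sumC_ext s _ (fun _ => C0)); [rewrite sumC_zero; cring |].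
    intros m Hm. rewrite HcA by auto. cring. }
  destruct (Nat.lt_ge_cases j s); [auto |].
  replace j with (s + (j - s))%nat by lia. apply HcB. simpl sumN in Hj. fold s in Hj. lia.
Qed.

End Concatenation.

Lemma exists_maximal (P : nat -> Prop) b :
  P 0%nat -> (forall m, P m -> (m <= b)%nat) -> exists d, P d /\ ~ P (S d).
Proof.
  intros P0 Hb.
  assert (H : forall r m, (b - m)%nat = r -> P m -> exists d, P d /\ ~ P (S d)).
  { induction r; intros m Hr Pm; destruct (classic (P (S m))) as [HS | HS]; eauto;
      specialize (Hb _ HS); [lia | apply (IHr (S m)); auto; lia]. }
  eauto.
Qed.

Lemma has_cdim_of_bounded n (P : Curve -> Prop) b :
  (forall D f, (forall m, (m < D)%nat -> P (f m)) -> cindep n f D -> (D <= b)%nat) ->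
  exists d, has_cdim n P d.
Proof.
  intros Hb. apply (exists_maximal (fun D => exists f : nat -> Curve,
                      (forall m, (m < D)%nat -> P (f m)) /\ cindep n f D) b).
  - exists (fun _ _ _ => C0). split; [intros; lia | intros c Hc m Hm; lia].
  - intros D (f & Hf & Hi). exact (Hb D f Hf Hi).
Qed.

Section Monodromy.
Variables (n : nat) (G dG Rb : MatFam).
Hypothesis HGder : forall t i j, (i < n)%nat -> (j < n)%nat ->
  derivable_pt_lim (fun s => G s i j) t (dG t i j).
Hypothesis HdGcont : forall i j, (i < n)%nat -> (j < n)%nat -> continuity (fun s => dG s i j).
Hypothesis HRbcont : forall i j, (i < n)%nat -> (j < n)%nat -> continuity (fun s => Rb s i j).
Hypothesis HGper : forall t i j, G (t + 1) i j = G t i j.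
Hypothesis HRbper : forall t i j, Rb (t + 1) i j = Rb t i j.

Lemma in_J1_solution z V : in_J1 n G dG Rb z V -> exists V1 V2,
  complex_solution n G dG Rb V V1 V2 /\
  forall i, (i < n)%nat -> V i 0 = C0 /\ V i 1 = C0 /\ V1 i 1 = cmul z (V1 i 0).
Proof.
  intros (V1 & V2 & Hd & Hj & Hb). exists V1, V2. split; [| exact Hb].
  split; split; try (intros t i Hi; apply (Hj t i Hi));
    intros i t Hi; destruct (Hd i t Hi) as (? & ? & ? & ?); unfold re, im; split; auto.
Qed.

Lemma in_J1_vanishing z V : in_J1 n G dG Rb z V -> vanishing_solution n G dG Rb V.
Proof.
  intros H. destruct (in_J1_solution z V H) as (V1 & V2 & HS & HB).
  exists V1, V2. split; [exact HS | intros i Hi; apply HB; auto].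
Qed.

Lemma in_J1_bloch z V : in_J1 n G dG Rb z V -> bloch n z V.
Proof.
  intros H. destruct (in_J1_solution z V H) as (V1 & V2 & HS & HB).
  exact (bloch_of_boundary n G dG Rb HGder HdGcont HRbcont HGper HRbper z V V1 V2 HS HB).
Qed.

Lemma J1_has_cdim z : exists d, has_cdim n (in_J1 n G dG Rb z) d.
Proof.
  apply (has_cdim_of_bounded n _ n). intros D f Hf Hi.
  apply (vanishing_solutions_dim_le n G dG Rb HGder HdGcont HRbcont D f); auto.
  intros m Hm. apply (in_J1_vanishing z), Hf; auto.
Qed.

(** Bases of the spaces [J^(1)(omega^k)], [k < N], concatenate into an
    independent family of solutions vanishing at [0]; hence the total
    dimension is at most [n]. *)
Lemma J1_total_dim_le N (d : nat -> nat) :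
  (forall k, (k < N)%nat -> has_cdim n (in_J1 n G dG Rb (omega_pow N k)) (d k)) ->
  (sumN N d <= n)%nat.
Proof.
  intros Hd.
  destruct (finite_choice (fun _ _ _ => C0) N (fun k F =>
              (forall m, (m < d k)%nat -> in_J1 n G dG Rb (omega_pow N k) (F m)) /\
              cindep n F (d k))) as [F HF]; [intros k Hk; apply (Hd k Hk) |].
  apply (vanishing_solutions_dim_le n G dG Rb HGder HdGcont HRbcont _ (concat d F N)).
  - intros j Hj. destruct (concat_spec d F N j Hj) as [Hk [m [Hm ->]]].
    apply (in_J1_vanishing (omega_pow N (block d N j))), HF; auto.
  - apply (concat_indep n (omega_pow N)).
    + intros a b Hab HbN. apply omega_pow_injective; auto.
    + intros k m Hk Hm. apply (in_J1_bloch (omega_pow N k)), HF; auto.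
    + intros k Hk. apply HF; auto.
Qed.

End Monodromy.

(** The theorem: the dimensions of the [J^(1)(omega^k)] sum to at most
    [n <= 2 n]. *)
Theorem lemma6p2
  (n : nat) (eps : nat -> R) (G dG Rb : MatFam)
  (Heps : forall i, (i < n)%nat -> eps i = 1 \/ eps i = -1)
  (HGder : forall t i j, (i < n)%nat -> (j < n)%nat ->
             derivable_pt_lim (fun s => G s i j) t (dG t i j))
  (HdGcont : forall i j, (i < n)%nat -> (j < n)%nat ->
             continuity (fun s => dG s i j))
  (HRbcont : forall i j, (i < n)%nat -> (j < n)%nat ->
             continuity (fun s => Rb s i j))
  (HGper : forall t i j, G (t + 1) i j = G t i j)
  (HRbper : forall t i j, Rb (t + 1) i j = Rb t i j)
  (HGskew : forall t i j, (i < n)%nat -> (j < n)%nat ->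
             eps i * G t i j + eps j * G t j i = 0)
  (HRbsym : forall t i j, (i < n)%nat -> (j < n)%nat ->
             eps i * Rb t i j = eps j * Rb t j i) :
  forall N : nat, (1 <= N)%nat ->
    exists d : nat -> nat,
      (forall k, (k < N)%nat -> has_cdim n (in_J1 n G dG Rb (omega_pow N k)) (d k)) /\
      (0 <= sumN N d)%nat /\ (sumN N d <= 2 * n)%nat.
Proof.
  intros N _.
  destruct (nat_choice (fun k d => has_cdim n (in_J1 n G dG Rb (omega_pow N k)) d))
    as [d Hd]; [intro k; apply J1_has_cdim; auto |].
  exists d. split; [intros k _; apply Hd |].
  pose proof (J1_total_dim_le n G dG Rb HGder HdGcont HRbcont HGper HRbper N d
                (fun k _ => Hd k)).
  lia.
Qed.
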